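(* Let $f:\mathbb{R}^d\times\mathcal{Z}\to\mathbb{R}$ be such that for every $z$, $f(\cdot,z)$ is non-negative, convex and $\beta$-smooth, let $S=(z_1,\dots,z_n)$, and suppose there is $w^\star\in\mathbb{R}^d$ that is a $\rho$-flat minimum of $f(\cdot,z_i)$ for every $i$ (so $F_S(w^\star+v)=0$ for all $\|v\|\le\rho$). Let $0<\eta\le \frac{1}{4\beta}$, $r>0$, $w_1\in\mathbb{R}^d$, and let $\{w_t\}_{t=1}^{T}$ satisfy $w_{t+1}=w_t-\eta\nabla F_S(w_t+v_t)$ where $\{v_t\}_{t=1}^T$ are arbitrary vectors with $\|v_t\|\le r$. Then $$\frac1T\sum_{t=1}^T F_S(w_t+v_t)-F_S(w^\star)\le \frac{\|w_1-w^\star\|^2}{\eta T}+4\beta\max\{r-\rho,0\}^2.$$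
   Context: Norms are Euclidean. $F_S(w)=\frac1n\sum_{i=1}^n f(w,z_i)$. A function is $\beta$-smooth if its gradient is $\beta$-Lipschitz. For $\rho\ge0$, a point $w^\star$ is a $\rho$-flat minimum of a non-negative function $g$ if $g(w)=0$ for every $w$ with $\|w-w^\star\|\le\rho$. *)

From HB Require Import structures.
From mathcomp Require Import all_boot all_order all_algebra.
From mathcomp Require Import all_classical all_reals all_analysis.
Set Implicit Arguments. Unset Strict Implicit. Unset Printing Implicit Defensive.
Import Order.TTheory GRing.Theory Num.Theory.
Import numFieldNormedType.Exports.
Local Open Scope ring_scope.

Definition dotv {R : realType} {d : nat} (u v : 'rV[R]_d) : R :=
  \sum_(i < d) u 0 i * v 0 i.
Definition enorm {R : realType} {d : nat} (v : 'rV[R]_d) : R :=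
  Num.sqrt (dotv v v).

Definition grad {R : realType} {d : nat} (F : 'rV[R]_d -> R) (w : 'rV[R]_d)
  : 'rV[R]_d := \row_(i < d) ('d F w : 'rV[R]_d -> R) (delta_mx 0 i).

Definition convex_fun {R : realType} {d : nat} (g : 'rV[R]_d -> R) : Prop :=
  forall (x y : 'rV[R]_d) (t : R), 0 <= t -> t <= 1 ->
    g (t *: x + (1 - t) *: y) <= t * g x + (1 - t) * g y.

Definition smooth_fun {R : realType} {d : nat} (beta : R) (g : 'rV[R]_d -> R)
  : Prop :=
  (forall w, differentiable g w) /\
  (forall x y, enorm (grad g x - grad g y) <= beta * enorm (x - y)).

Definition flat_min {R : realType} {d : nat} (rho : R) (g : 'rV[R]_d -> R)
  (wstar : 'rV[R]_d) : Prop :=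
  forall w, enorm (w - wstar) <= rho -> g w = 0.

Definition FS {R : realType} {d : nat} {Z : Type} (f : 'rV[R]_d -> Z -> R)
  (n : nat) (z : 'I_n -> Z) (w : 'rV[R]_d) : R :=
  (n%:R)^-1 * \sum_(i < n) f w (z i).

(* Write u_t = w_t + v_t and g_t = grad F_S(u_t). Radially pulling w* + v_t back
   into the flat ball gives a zero p of F_S with |w* + v_t - p| <= max(r - rho, 0),
   so convexity yields F_S(u_t) <= <g_t, w_t - w*> + |g_t| max(r - rho, 0).  A
   non-negative beta-smooth function satisfies |grad F|^2 <= 2 beta F, which
   (with AM-GM and eta <= 1/(4 beta)) absorbs both the error term and the
   eta^2 |g_t|^2 term of the expansion of |w_{t+1} - w*|^2.  Summing the
   resulting one-step inequality telescopes. *)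

From HB Require Import structures.
From mathcomp Require Import all_boot all_order all_algebra.
From mathcomp Require Import all_classical all_reals all_analysis.
From mathcomp Require Import ring lra.
Import Order.TTheory GRing.Theory Num.Theory.
Import numFieldNormedType.Exports.
Local Open Scope ring_scope.

Lemma ler_sum_telescope {R : numDomainType} {a b : nat -> R} {m n : nat} :
  (m <= n)%N -> (forall t, (m <= t < n)%N -> a t <= b t - b t.+1) ->
  \sum_(m <= t < n) a t <= b m - b n.
Proof.
move=> le_mn ab; rewrite -opprB -telescope_sumr // -sumrN.
by apply: ler_sum_nat => t /ab; rewrite opprB.
Qed.

Section InnerProduct.
Context {R : realType} {d : nat}.
Implicit Types (u v x : 'rV[R]_d) (a : R).

Lemma dotvC u v : dotv u v = dotv v u.
Proof. by apply: eq_bigr => i _; rewrite mulrC. Qed.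

Lemma dotvDl u v x : dotv (u + v) x = dotv u x + dotv v x.
Proof. by rewrite /dotv -big_split; apply: eq_bigr => i _; rewrite mxE mulrDl. Qed.

Lemma dotvZl a u x : dotv (a *: u) x = a * dotv u x.
Proof. by rewrite /dotv mulr_sumr; apply: eq_bigr => i _; rewrite mxE mulrA. Qed.

Lemma dotvNl u x : dotv (- u) x = - dotv u x.
Proof. by rewrite -scaleN1r dotvZl mulN1r. Qed.

Lemma dotvBl u v x : dotv (u - v) x = dotv u x - dotv v x.
Proof. by rewrite dotvDl dotvNl. Qed.

Lemma dotvDr u v x : dotv x (u + v) = dotv x u + dotv x v.
Proof. by rewrite dotvC dotvDl !(dotvC x). Qed.

Lemma dotvZr a u x : dotv x (a *: u) = a * dotv x u.
Proof. by rewrite dotvC dotvZl dotvC. Qed.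

Lemma dotvNr u x : dotv x (- u) = - dotv x u.
Proof. by rewrite dotvC dotvNl dotvC. Qed.

Lemma dotvBr u v x : dotv x (u - v) = dotv x u - dotv x v.
Proof. by rewrite dotvC dotvBl !(dotvC x). Qed.

Lemma dotvv_ge0 u : 0 <= dotv u u.
Proof. by apply: sumr_ge0 => i _; rewrite -expr2 sqr_ge0. Qed.

Lemma dotvv_eq0 u : (dotv u u == 0) = (u == 0).
Proof.
apply/idP/eqP => [|->]; last by rewrite /dotv big1 // => i _; rewrite mxE mul0r.
rewrite psumr_eq0 => [/allP u0|i _]; last by rewrite -expr2 sqr_ge0.
apply/rowP => i; rewrite mxE; apply/eqP.
by have /u0 := mem_index_enum i; rewrite /= mulf_eq0 orbb.
Qed.

Lemma enorm_ge0 u : 0 <= enorm u.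
Proof. exact: sqrtr_ge0. Qed.

Lemma enorm_sqr u : enorm u ^+ 2 = dotv u u.
Proof. by rewrite sqr_sqrtr // dotvv_ge0. Qed.

Lemma enorm0 : enorm (0 : 'rV[R]_d) = 0.
Proof. by apply/eqP; rewrite sqrtr_eq0 le_eqVlt dotvv_eq0 eqxx. Qed.

Lemma enormZ a u : enorm (a *: u) = `|a| * enorm u.
Proof. by rewrite /enorm dotvZl dotvZr mulrA -expr2 sqrtrM ?sqr_ge0 // sqrtr_sqr. Qed.

Lemma enorm_sqrB u v : enorm (u - v) ^+ 2 = enorm u ^+ 2 - 2 * dotv u v + enorm v ^+ 2.
Proof. by rewrite !enorm_sqr !dotvBl !dotvBr (dotvC v u); ring. Qed.

Lemma dotv_le_enorm u v : dotv u v <= enorm u * enorm v.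
Proof.
have [->|v0] := eqVneq v 0.
  by rewrite enorm0 mulr0 /dotv big1 // => i _; rewrite mxE mulr0.
have vv_gt0 : 0 < dotv v v by rewrite lt_def dotvv_eq0 v0 dotvv_ge0.
suff : dotv u v ^+ 2 <= dotv u u * dotv v v.
  rewrite -!enorm_sqr -exprMn -ler_sqrt ?sqr_ge0 // !sqrtr_sqr.
  by move=> /(le_trans (ler_norm _)); rewrite ger0_norm // mulr_ge0 ?enorm_ge0.
have := dotvv_ge0 (dotv v v *: u - dotv u v *: v).
rewrite !dotvBl !dotvBr !dotvZl !dotvZr (dotvC v u) => h.
have : 0 <= dotv v v * (dotv u u * dotv v v - dotv u v ^+ 2) by rewrite expr2; lra.
by rewrite pmulr_rge0 // subr_ge0.
Qed.

Lemma enormD u v : enorm (u + v) <= enorm u + enorm v.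
Proof.
rewrite -(ler_pXn2r (isT : (0 < 2)%N)) ?nnegrE ?addr_ge0 ?enorm_ge0 //.
rewrite sqrrD !enorm_sqr dotvDl !dotvDr (dotvC v u).
have := dotv_le_enorm u v; rewrite -!enorm_sqr; lra.
Qed.

Lemma enorm_sum (I : finType) (a : I -> 'rV[R]_d) :
  enorm (\sum_i a i) <= \sum_i enorm (a i).
Proof.
elim/big_rec2: _ => [|i y1 y2 _ IH]; first by rewrite enorm0.
by apply: (le_trans (enormD _ _)); rewrite lerD2l.
Qed.

End InnerProduct.

Section Gradient.
Context {R : realType} {d : nat}.
Implicit Types (G : 'rV[R]_d -> R) (u x h : 'rV[R]_d).

Lemma derive_grad G x h : differentiable G x -> 'D_h G x = dotv (grad G x) h.
Proof.
move=> dG; rewrite deriveE // {1}(row_sum_delta h) linear_sum /dotv.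
by apply: eq_bigr => i _; rewrite linearZ /= mxE mulrC.
Qed.

Lemma is_derive_line G x h (t : R) : (forall y, differentiable G y) ->
  is_derive t 1 (fun s : R => G (x + s *: h)) (dotv (grad G (x + t *: h)) h).
Proof.
move=> dG.
have quotientE : (fun s : R => s^-1 *: (((fun s => G (x + s *: h)) \o shift t) (s *: 1)
                                 - G (x + t *: h)))
       = (fun s : R => s^-1 *: ((G \o shift (x + t *: h)) (s *: h) - G (x + t *: h))).
  apply/funext => s /=; congr (_ *: (G _ - _)).
  by rewrite scalerDl [s *: 1]mulr1 addrCA addrA.
apply: DeriveDef; first by rewrite /derivable quotientE; apply: diff_derivable.
by rewrite /derive quotientE -derive_grad.
Qed.

Lemma convex_grad_le G u p : convex_fun G -> differentiable G u ->
  G u + dotv (grad G u) (p - u) <= G p.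
Proof.
move=> cG dG; rewrite -derive_grad // addrC -lerBrDr.
have cvg_right := cvg_dnbhs_at_right (diff_derivable (v := p - u) dG).
rewrite /derive -(cvg_lim _ cvg_right) //; apply: limr_le; first exact: cvgP cvg_right.
near=> s; have s_gt0 : 0 < s by near: s; exact: nbhs_right_gt.
have s_lt1 : s < 1 by near: s; exact: nbhs_right_lt.
have := cG p u s (ltW s_gt0) (ltW s_lt1).
have -> : s *: p + (1 - s) *: u = s *: (p - u) + u.
  by apply/rowP => i; rewrite !mxE; ring.
by rewrite /= addrC => H; rewrite ler_pdivrMl //; lra.
Unshelve. all: by end_near.
Qed.

Lemma smooth_descent G (beta : R) x h : smooth_fun beta G ->
  G (x + h) <= G x + dotv (grad G x) h + beta / 2 * enorm h ^+ 2.
Proof.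
move=> [dG Lip]; set g := grad G x; set a := dotv g h; set q := beta / 2 * enorm h ^+ 2.
pose psi s := G (x + s *: h) - a * s - q * s ^+ 2.
have psi' (s : R) : is_derive s 1 psi (dotv (grad G (x + s *: h)) h - a - 2 * q * s).
  apply: is_derive_eq.
    exact: is_deriveB (is_deriveB (is_derive_line G x h s dG)
      (is_deriveZ a (is_derive_id s 1))) (is_deriveZ q (is_deriveX 2 (is_derive_id s 1))).
  have scE (k y : R) : k *: y = k * y by [].
  by rewrite !scE expr1 !mulr1 mulrA [q * 2]mulrC.
have psi_cont : {within `[0, 1], continuous psi}%classic.
  apply: continuous_subspaceT => s; apply: differentiable_continuous.
  by apply/derivable1_diffP; case: (psi' s).
have [c] := MVT ltr01 (fun s _ => psi' s) psi_cont.
rewrite in_itv /= => /andP[c_gt0 _].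
have Lip_c : dotv (grad G (x + c *: h)) h - a <= beta * c * enorm h ^+ 2.
  rewrite -dotvBl; apply: (le_trans (dotv_le_enorm _ _)); rewrite expr2 mulrA.
  apply: ler_wpM2r; first exact: enorm_ge0.
  have step_c : x + c *: h - x = c *: h by rewrite addrC addKr.
  by have := Lip (x + c *: h) x; rewrite step_c enormZ gtr0_norm // mulrA.
rewrite /psi scale1r scale0r addr0 expr1n expr0n /= !mulr1 !mulr0 !subr0 => E.
have qc : 2 * q * c = beta * c * enorm h ^+ 2 by rewrite /q; field.
rewrite qc mulr1 in E; lra.
Qed.

End Gradient.

Section PerturbedStep.
Context {R : realType} {d : nat}.
Variables (G : 'rV[R]_d -> R) (beta : R).
Hypotheses (beta_gt0 : 0 < beta) (G_ge0 : forall x, 0 <= G x)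
  (G_convex : convex_fun G) (G_smooth : smooth_fun beta G).

Lemma grad_sqr_le x : enorm (grad G x) ^+ 2 <= 2 * beta * G x.
Proof.
set g := grad G x.
have := smooth_descent G beta x (- beta^-1 *: g) G_smooth.
rewrite dotvZr enormZ normrN gtr0_norm ?invr_gt0 // -enorm_sqr -/g.
have := G_ge0 (x + - beta^-1 *: g).
move: (G _) (enorm g) => Gh n Gh_ge0 descent.
have b0 : beta != 0 by rewrite gt_eqF.
suff : 0 <= 2 * beta * G x - n ^+ 2 by rewrite subr_ge0.
have -> : 2 * beta * G x - n ^+ 2
    = 2 * beta * (G x + - beta^-1 * n ^+ 2 + beta / 2 * (beta^-1 * n) ^+ 2) by field.
by apply: mulr_ge0; [rewrite mulr_ge0 // ltW | exact: le_trans descent].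
Qed.

Variables (rho r : R) (wstar : 'rV[R]_d).
Hypotheses (rho_ge0 : 0 <= rho) (G_flat : flat_min rho G wstar).

(* Pull [wstar + v] radially back into the ball of radius [rho]. *)
Lemma flat_min_near v : enorm v <= r ->
  exists2 p, G p = 0 & enorm (wstar + v - p) <= Num.max (r - rho) 0.
Proof.
move=> v_le_r; have [v_le_rho|rho_lt_v] := leP (enorm v) rho.
  exists (wstar + v); first by apply: G_flat; rewrite addrC addKr.
  by rewrite subrr enorm0 le_max lexx orbT.
have v_gt0 : 0 < enorm v by exact: le_lt_trans rho_lt_v.
exists (wstar + (rho / enorm v) *: v).
  apply: G_flat; by rewrite addrC addKr enormZ ger0_norm ?divr_ge0 ?enorm_ge0 // divfK ?gt_eqF.
rewrite opprD addrACA subrr add0r -{1}[v]scale1r -scalerBl enormZ ger0_norm.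
  by rewrite mulrBl mul1r divfK ?gt_eqF // le_max lerB // ltW.
by rewrite subr_ge0 ler_pdivrMr // mul1r ltW.
Qed.

Lemma convex_flat_le y v : enorm v <= r ->
  G (y + v) <= dotv (grad G (y + v)) (y - wstar)
               + enorm (grad G (y + v)) * Num.max (r - rho) 0.
Proof.
move=> /flat_min_near[p Gp0 near_p]; set g := grad G (y + v).
have := convex_grad_le G (y + v) p G_convex (proj1 G_smooth (y + v)).
have -> : p - (y + v) = - ((y - wstar) + (wstar + v - p)).
  by apply/rowP => i; rewrite !mxE; ring.
rewrite Gp0 dotvNr dotvDr -/g => convex_ineq.
have := ler_wpM2l (enorm_ge0 g) near_p.
have := dotv_le_enorm g (wstar + v - p); lra.
Qed.

Lemma perturbed_step_le (eta : R) y v :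
  0 < eta -> eta <= (4 * beta)^-1 -> enorm v <= r ->
  G (y + v) <= (enorm (y - wstar) ^+ 2 - enorm (y - eta *: grad G (y + v) - wstar) ^+ 2) / eta
               + 4 * beta * Num.max (r - rho) 0 ^+ 2.
Proof.
move=> eta_gt0 eta_le v_le_r.
have G_le := convex_flat_le y v v_le_r; have grad_le := grad_sqr_le (y + v).
set g := grad G (y + v) in G_le grad_le *; set del := Num.max (r - rho) 0 in G_le *.
have -> : y - eta *: g - wstar = (y - wstar) - eta *: g by rewrite addrAC.
rewrite [enorm (_ - eta *: g) ^+ 2]enorm_sqrB dotvZr enormZ gtr0_norm // (dotvC _ g).
move: (G (y + v)) (G_ge0 (y + v)) (dotv g (y - wstar)) (enorm g) G_le grad_le
  => Gu Gu_ge0 X n G_le grad_le.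
(* AM-GM, [8 beta n del <= n^2 + 16 beta^2 del^2], absorbed via [n^2 <= 2 beta Gu] *)
have n_del_le : n * del <= Gu / 4 + 2 * beta * del ^+ 2.
  rewrite -(ler_pM2l (_ : 0 < 8 * beta)) ?mulr_gt0 //.
  have := sqr_ge0 (n - 4 * beta * del); rewrite sqrrB; lra.
have eta_n_le : eta * n ^+ 2 <= Gu / 2.
  have eta_beta : eta * beta <= 4^-1.
    have := ler_wpM2r (ltW beta_gt0) eta_le.
    by rewrite invfM -mulrA mulVf ?gt_eqF // mulr1.
  have := ler_wpM2l (ltW eta_gt0) grad_le; have := ler_wpM2r Gu_ge0 eta_beta; lra.
have -> : (enorm (y - wstar) ^+ 2 - (enorm (y - wstar) ^+ 2 - 2 * (eta * X) + (eta * n) ^+ 2))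
          / eta = 2 * X - eta * n ^+ 2 by field; rewrite gt_eqF.
lra.
Qed.

Lemma perturbed_gd_bound (eta : R) (T : nat) (w v : nat -> 'rV[R]_d) :
  0 < eta -> eta <= (4 * beta)^-1 -> (0 < T)%N ->
  (forall t, (1 <= t <= T)%N -> enorm (v t) <= r) ->
  (forall t, (1 <= t < T)%N -> w t.+1 = w t - eta *: grad G (w t + v t)) ->
  (T%:R)^-1 * (\sum_(1 <= t < T.+1) G (w t + v t)) - G wstar
    <= enorm (w 1%N - wstar) ^+ 2 / (eta * T%:R) + 4 * beta * Num.max (r - rho) 0 ^+ 2.
Proof.
move=> eta_gt0 eta_le T_gt0 v_le w_next.
set C := 4 * beta * _ ^+ 2.
(* [D] vanishes past [T]: the iterate after step [T] is unconstrained, and its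
   distance term is simply dropped as non-negative. *)
pose D t := if (t <= T)%N then enorm (w t - wstar) ^+ 2 / eta else 0.
have step t : (1 <= t < T.+1)%N -> G (w t + v t) - C <= D t - D t.+1.
  rewrite ltnS => /andP[t_ge1 t_le]; rewrite lerBlDr.
  apply: (le_trans (perturbed_step_le _ _ _ eta_gt0 eta_le (v_le t _))); first by rewrite t_ge1.
  rewrite lerD2r /D t_le mulrBl lerD2l lerN2; case: ltnP => [t_lt|_].
    by rewrite w_next ?t_ge1.
  by rewrite divr_ge0 ?sqr_ge0 // ltW.
have := ler_sum_telescope (isT : (1 <= T.+1)%N) step.
rewrite sumrB sumr_const_nat subn1 /= /D T_gt0 ltnn subr0 -[C *+ T]mulr_natr.
have -> : G wstar = 0 by apply: G_flat; rewrite subrr enorm0.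
move: (\sum_(_ <= _ < _) _) (enorm _ ^+ 2) => S A sum_le.
have T_neq0 : T%:R != 0 :> R by rewrite pnatr_eq0 -lt0n.
have -> : A / (eta * T%:R) = T%:R^-1 * (A / eta) by field; rewrite gt_eqF.
have -> : T%:R^-1 * S - 0 = T%:R^-1 * (S - C * T%:R) + C by field.
by rewrite lerD2r ler_wpM2l ?invr_ge0 ?ler0n.
Qed.

End PerturbedStep.

Section EmpiricalRisk.
Context {R : realType} {d : nat} {Z : Type}.
Variables (f : 'rV[R]_d -> Z -> R) (n : nat) (z : 'I_n -> Z).

Lemma FSE : FS f z = n%:R^-1 *: \sum_(i < n) f ^~ (z i).
Proof. by apply/funext => x; rewrite /FS /= fct_sumE. Qed.

Lemma FS_ge0 x : (forall i, 0 <= f x (z i)) -> 0 <= FS f z x.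
Proof. by move=> f_ge0; rewrite /FS mulr_ge0 ?invr_ge0 ?ler0n ?sumr_ge0. Qed.

Lemma FS_convex : (forall i, convex_fun (f ^~ (z i))) -> convex_fun (FS f z).
Proof.
move=> f_convex x y t t_ge0 t_le1; rewrite /FS mulrCA [X in _ <= _ + X]mulrCA -mulrDr.
rewrite ler_wpM2l ?invr_ge0 ?ler0n // !mulr_sumr -big_split ler_sum // => i _.
exact: f_convex.
Qed.

Variable beta : R.
Hypothesis f_smooth : forall i, smooth_fun beta (f ^~ (z i)).

Lemma FS_differentiable x : differentiable (FS f z) x.
Proof.
rewrite FSE; apply/differentiableZ/differentiable_sum => i.
by case: (f_smooth i).
Qed.

Lemma grad_FS x : grad (FS f z) x = n%:R^-1 *: \sum_(i < n) grad (f ^~ (z i)) x.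
Proof.
have f_der i h : derivable (f ^~ (z i)) x h by apply/diff_derivable; case: (f_smooth i).
apply/rowP => j; rewrite !mxE summxE -deriveE; last exact: FS_differentiable.
rewrite FSE deriveZ /=; last exact: derivable_sum.
rewrite derive_sum //; congr (_ * _); apply: eq_bigr => i _.
by rewrite mxE deriveE //; case: (f_smooth i).
Qed.

Lemma FS_smooth : 0 <= beta -> smooth_fun beta (FS f z).
Proof.
move=> beta_ge0; split=> [|x y]; first exact: FS_differentiable.
rewrite !grad_FS -scalerBr -sumrB enormZ ger0_norm ?invr_ge0 ?ler0n //.
apply: (le_trans (ler_wpM2l _ (enorm_sum _ _))); first by rewrite invr_ge0 ler0n.
apply: (@le_trans _ _ (n%:R^-1 * \sum_(i < n) (beta * enorm (x - y)))).
  by rewrite ler_wpM2l ?invr_ge0 ?ler0n // ler_sum // => i _; case: (f_smooth i).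
have [->|n_neq0] := eqVneq n 0%N; first by rewrite invr0 mul0r mulr_ge0 ?enorm_ge0.
by rewrite sumr_const card_ord -(mulr_natl (beta * enorm (x - y))) mulKf ?pnatr_eq0.
Qed.

End EmpiricalRisk.

Lemma FS_flat_min {R : realType} {d : nat} {Z : Type} (f : 'rV[R]_d -> Z -> R) (n : nat)
    (z : 'I_n -> Z) (rho : R) (wstar : 'rV[R]_d) :
  (forall i, flat_min rho (f ^~ (z i)) wstar) -> flat_min rho (FS f z) wstar.
Proof. by move=> f_flat p p_near; rewrite /FS big1 ?mulr0 // => i _; apply: f_flat. Qed.

Theorem mainTheorem2 (R : realType) (d : nat) (Z : Type)
  (f : 'rV[R]_d -> Z -> R) (beta : R) (n : nat) (z : 'I_n -> Z)
  (rho r eta : R) (wstar : 'rV[R]_d) (T : nat)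
  (w v : nat -> 'rV[R]_d) :
  0 < beta ->
  (forall zz : Z, (forall x, 0 <= f x zz) /\ convex_fun (f ^~ zz) /\
                  smooth_fun beta (f ^~ zz)) ->
  0 <= rho ->
  (forall i : 'I_n, flat_min rho (f ^~ (z i)) wstar) ->
  0 < eta -> eta <= (4 * beta)^-1 ->
  0 < r ->
  (0 < T)%N ->
  (forall t, (1 <= t <= T)%N -> enorm (v t) <= r) ->
  (forall t, (1 <= t < T)%N ->
     w t.+1 = w t - eta *: grad (FS f z) (w t + v t)) ->
  (T%:R)^-1 * (\sum_(1 <= t < T.+1) FS f z (w t + v t)) - FS f z wstar
    <= enorm (w 1%N - wstar) ^+ 2 / (eta * T%:R)
       + 4 * beta * (Num.max (r - rho) 0) ^+ 2.
Proof.
move=> beta_gt0 hf rho_ge0 f_flat eta_gt0 eta_le _ T_gt0 v_le w_next.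
have f_ge0 x i : 0 <= f x (z i) by case: (hf (z i)) => /(_ x).
have f_convex i : convex_fun (f ^~ (z i)) by case: (hf (z i)) => _ [].
have f_smooth i : smooth_fun beta (f ^~ (z i)) by case: (hf (z i)) => _ [].
apply: perturbed_gd_bound => //.
- by move=> x; exact: FS_ge0.
- exact: FS_convex.
- exact/FS_smooth/ltW.
- exact: FS_flat_min.
Qed.
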